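(* Let $\Sigma$ be the signature consisting of two non-rigid constant symbols $a,b$. For $n\in\mathbb N$ let $\chi_n$ be a classical first-order sentence (in the pure language of equality) expressing that the domain has at least $n$ elements, and let $X=\{\chi_n\mid n\in\mathbb N\}$. Let $\eta := \big(\mathrm{dep}(a,b)\wedge \mathrm{dep}(b,a)\wedge \exists^{\mathsf i}x\,(x\neq b)\big)\to \exists^{\mathsf i}x\,(x\neq a)$ and $\theta:=\exists^{\mathsf i}x\,\exists^{\mathsf i}y\,\neg(x=a\wedge y=b)$. Then: (1) $X\cup\{\eta\}\models_{\mathrm{id}}\theta$; and (2) for every finite $X_0\subseteq X$, $X_0\cup\{\eta\}\not\models_{\mathrm{id}}\theta$.
   Context: Inquisitive first-order logic InqBQ. A signature consists of predicate symbols and function symbols, each with an arity; function symbols are either rigid or non-rigid, and function symbols of arity $0$ are constant symbols. Terms are built from variables and function symbols as usual. Formulas are given by $\phi ::= P(t_1,\dots,t_n)\mid (t=t')\mid \bot\mid (\phi\wedge\phi)\mid(\phi\mathbin{\vee\!\!\!\vee}\phi)\mid(\phi\to\phi)\mid\forall x\phi\mid\exists^{\mathsf i}x\phi$, where $\mathbin{\vee\!\!\!\vee}$ is inquisitive disjunction and $\exists^{\mathsf i}$ is the inquisitive existential quantifier. Abbreviations: $\neg\phi:=\phi\to\bot$, $(t\neq t'):=\neg(t=t')$; the classical connectives $\vee,\exists$ are defined by $\phi\vee\psi:=\neg(\neg\phi\wedge\neg\psi)$, $\exists x\phi:=\neg\forall x\neg\phi$. Formulas without $\mathbin{\vee\!\!\!\vee}$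 and $\exists^{\mathsf i}$ are called classical. An id-model is a triple $M=(W,D,I)$ with $W$ a non-empty set of worlds, $D$ a non-empty domain, and $I$ assigning to each world $w$ an interpretation $I_w$ giving each $n$-ary predicate $P$ a relation $P_w\subseteq D^n$ and each $n$-ary function symbol $f$ a function $f_w:D^n\to D$ (rigid symbols get the same interpretation at every world); equality is interpreted as identity on $D$ at every world. Term values $[t]^g_w$ are defined as usual. Support of a formula at a state $s\subseteq W$ under an assignment $g$: $M,s\models_g P(t_1,\dots,t_n)$ iff $([t_1]^g_w,\dots,[t_n]^g_w)\in P_w$ for all $w\in s$; $M,s\models_g t=t'$ iff $[t]^g_w=[t']^g_w$ for all $w\in s$; $M,s\models_g\bot$ iff $s=\emptyset$; $\wedge$ is conjunction of support; $M,s\models_g\phi\mathbin{\vee\!\!\!\vee}\psi$ iff $M,s\models_g\phi$ or $M,s\models_g\psi$; $M,s\models_g\phi\to\psi$ iff for every $t\subseteq s$, $M,t\models_g\phi$ implies $M,t\models_g\psi$; $M,s\models_g\forall x\phi$ iff $M,s\models_{g[x\mapsto d]}\phi$ for all $d\in D$; $M,s\models_g\exists^{\mathsf i}x\phi$ iff $M,s\models_{g[x\mapsto d]}\phi$ for some $d\in D$. For a term $t$, $\lambda t:=\exists^{\mathsf i}x\,(x=t)$ with $x$ a variable not occurring in $t$, and $\mathrm{dep}(t,t'):=\lambda t\to\lambda t'$. id-entailment: $\Phi\models_{\mathrm{id}}\psi$ means that for every id-model $M$, state $s\subseteq W$ and assignment $g$, if $M,s\models_g\phi$ for all $\phi\in\Phi$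 then $M,s\models_g\psi$. *)

From Stdlib Require Import List Arith.
Import ListNotations.

Inductive term : Type :=
| tvar : nat -> term
| tA : term
| tB : term.

Inductive form : Type :=
| fEq : term -> term -> form
| fBot : form
| fAnd : form -> form -> form
| fIdisj : form -> form -> form
| fImp : form -> form -> form
| fAll : nat -> form -> form
| fIex : nat -> form -> form.

Definition fNeg (p : form) : form := fImp p fBot.
Definition fNeq (t t' : term) : form := fNeg (fEq t t').
Definition fOr (p q : form) : form := fNeg (fAnd (fNeg p) (fNeg q)).
Definition fEx (x : nat) (p : form) : form := fNeg (fAll x (fNeg p)).
Definition fTop : form := fNeg fBot.

(* id-models for Sigma: non-empty W, non-empty D, and a world-dependent
   (non-rigid) interpretation of a and b. Equality is identity on D. *)
Record model : Type := {
  W : Type;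
  D : Type;
  w0 : W;
  d0 : D;
  aI : W -> D;
  bI : W -> D
}.

Definition state (M : model) := W M -> Prop.
Definition assignment (M : model) := nat -> D M.

Definition update {M : model} (g : assignment M) (x : nat) (d : D M)
  : assignment M := fun y => if Nat.eqb y x then d else g y.

Definition tval (M : model) (g : assignment M) (w : W M) (t : term) : D M :=
  match t with
  | tvar x => g x
  | tA => aI M w
  | tB => bI M w
  end.

Definition substate {M : model} (t s : state M) : Prop :=
  forall w, t w -> s w.

Fixpoint supp (M : model) (s : state M) (g : assignment M) (p : form)
  {struct p} : Prop :=
  match p with
  | fEq t t' => forall w, s w -> tval M g w t = tval M g w t'
  | fBot => forall w, ~ s w
  | fAnd p q => supp M s g p /\ supp M s g q
  | fIdisj p q => supp M s g p \/ supp M s g q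
  | fImp p q => forall t : state M, substate t s ->
                  supp M t g p -> supp M t g q
  | fAll x p => forall d : D M, supp M s (update g x d) p
  | fIex x p => exists d : D M, supp M s (update g x d) p
  end.

Definition id_entails (Phi : form -> Prop) (psi : form) : Prop :=
  forall (M : model) (s : state M) (g : assignment M),
    (forall phi, Phi phi -> supp M s g phi) -> supp M s g psi.

(* lambda t := Ei x (x = t) with x not in t (t is a constant here, so x := 0)
   and dep(t, t') := lambda t -> lambda t'. *)
Definition lam (t : term) : form := fIex 0 (fEq (tvar 0) t).
Definition dep (t t' : term) : form := fImp (lam t) (lam t').

Fixpoint distinct_from (i : nat) (n : nat) : form :=
  match n with
  | 0 => fTop
  | S m => fAnd (distinct_from i m) (fNeq (tvar m) (tvar i))
  end.

Fixpoint all_distinct (n : nat) : form :=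
  match n with
  | 0 => fTop
  | S m => fAnd (all_distinct m) (distinct_from m m)
  end.

Fixpoint ex_prefix (k : nat) (p : form) : form :=
  match k with
  | 0 => p
  | S m => ex_prefix m (fEx m p)
  end.

Definition chi (n : nat) : form := ex_prefix n (all_distinct n).

Definition X : form -> Prop := fun phi => exists n, phi = chi n.

Definition eta : form :=
  fImp (fAnd (dep tA tB) (fAnd (dep tB tA) (fIex 0 (fNeq (tvar 0) tB))))
       (fIex 0 (fNeq (tvar 0) tA)).

Definition theta : form :=
  fIex 0 (fIex 1 (fNeg (fAnd (fEq (tvar 0) tA) (fEq (tvar 1) tB)))).

From Stdlib Require Import List Arith Lia Classical ClassicalEpsilon FunctionalExtensionality FinFun.
Import ListNotations.

(* (1) On the empty state every formula is supported.  On a non-empty state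
   the sentences of X make the domain infinite, so it carries an injection f
   missing some point d.  If theta failed, every pair (x, y) would be the value
   of (a, b) at some world.  On the substate where b = f(a), each of a, b
   determines the other and b never takes the value d, so eta yields a value
   never taken by a there, although the world with (a, b) = (x, f x) lies in
   it for every x.
   (2) A finite X0 only asks for at most N elements.  Over a domain of size
   N + 1, eta is valid: if a took every value on a state where b determines a,
   choosing a world for each value of a would give an injection of the domain
   into itself through b, hence a surjection, so no x could avoid b.  But theta
   fails on the state of all worlds D x D with (a, b) the two projections. *)

Definition single {M : model} (w : W M) : state M := fun v => v = w.

Lemma supp_persistent M p : forall (s t : state M) g,
  substate t s -> supp M s g p -> supp M t g p.
Proof.
  induction p; simpl; intros s u g Hus H.
  - intros w Hw; apply H, Hus, Hw.
  - intros w Hw; apply (H w), Hus, Hw.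
  - destruct H; split; eauto.
  - destruct H; [left | right]; eauto.
  - intros v Hvu; apply H; intros w Hw; apply Hus, Hvu, Hw.
  - intros d; eauto.
  - destruct H as [d Hd]; exists d; eauto.
Qed.

Lemma supp_empty M p : forall (s : state M) g, (forall w, ~ s w) -> supp M s g p.
Proof.
  induction p; simpl; intros s g Hs.
  - intros w Hw; destruct (Hs w Hw).
  - exact Hs.
  - split; auto.
  - left; auto.
  - intros t Hts _; apply IHp2; intros w Hw; exact (Hs w (Hts w Hw)).
  - intros d; auto.
  - exists (d0 M); auto.
Qed.

Lemma supp_single_eq M (w : W M) g t1 t2 :
  supp M (single w) g (fEq t1 t2) <-> tval M g w t1 = tval M g w t2.
Proof. simpl; split; [intros H; apply H; reflexivity | intros H v ->; exact H]. Qed.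

Lemma supp_single_imp M (w : W M) g p q :
  supp M (single w) g (fImp p q) <->
  (supp M (single w) g p -> supp M (single w) g q).
Proof.
  simpl; split.
  - intros H; apply H; intros v Hv; exact Hv.
  - intros H t Ht Hp.
    destruct (classic (t w)) as [Htw | Hntw].
    + (* [t] and [single w] have the same worlds *)
      assert (Hwt : substate (single w) t) by (intros v ->; exact Htw).
      apply (supp_persistent M q (single w) t g Ht), H.
      exact (supp_persistent M p t (single w) g Hwt Hp).
    + apply supp_empty; intros v Hv; apply Hntw.
      rewrite <- (Ht v Hv); exact Hv.
Qed.

Lemma supp_single_neg M (w : W M) g p :
  supp M (single w) g (fNeg p) <-> ~ supp M (single w) g p.
Proof.
  unfold fNeg; rewrite supp_single_imp; simpl.
  split; intros H Hp; [exact (H Hp w eq_refl) | destruct (H Hp)].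
Qed.

Lemma supp_single_ex M (w : W M) g x p :
  supp M (single w) g (fEx x p) <-> exists d, supp M (single w) (update g x d) p.
Proof.
  unfold fEx; rewrite supp_single_neg.
  change (supp M (single w) g (fAll x (fNeg p))) with
    (forall d, supp M (single w) (update g x d) (fNeg p)).
  setoid_rewrite supp_single_neg.
  split; [intros H; apply NNPP; intros Hn; apply H; eauto | intros [d Hd] H; exact (H d Hd)].
Qed.

(** * Classical formulas are flat *)

Fixpoint is_classical (p : form) : Prop :=
  match p with
  | fEq _ _ | fBot => True
  | fAnd p q | fImp p q => is_classical p /\ is_classical q
  | fAll _ p => is_classical p
  | fIdisj _ _ | fIex _ _ => False
  end.

Lemma supp_classical M p : is_classical p -> forall (s : state M) g,
  supp M s g p <-> forall w, s w -> supp M (single w) g p.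
Proof.
  induction p; simpl; intros Hp s g; try tauto.
  - split; [intros H w Hw v -> | intros H w Hw; apply (H w Hw w)]; auto; reflexivity.
  - split; [intros H w Hw; destruct (H w Hw) | intros H w Hw; exact (H w Hw w eq_refl)].
  - destruct Hp as [Hp1 Hp2]; rewrite (IHp1 Hp1), (IHp2 Hp2). firstorder.
  - destruct Hp as [Hp1 Hp2]; split.
    + intros H w Hw t Ht; apply H; intros v Hv; rewrite (Ht v Hv); exact Hw.
    + intros H t Hts Ht1; rewrite (IHp2 Hp2); rewrite (IHp1 Hp1) in Ht1.
      intros w Hw; apply (H w (Hts w Hw) (single w)); [intros v Hv; exact Hv |].
      exact (Ht1 w Hw).
  - split.
    + intros H w Hw d; specialize (H d); rewrite (IHp Hp) in H; exact (H w Hw).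
    + intros H d; rewrite (IHp Hp); intros w Hw; exact (H w Hw d).
Qed.

Lemma supp_neq M (s : state M) g t1 t2 :
  supp M s g (fNeq t1 t2) <-> forall w, s w -> tval M g w t1 <> tval M g w t2.
Proof.
  rewrite supp_classical by (simpl; tauto).
  unfold fNeq; setoid_rewrite supp_single_neg; setoid_rewrite supp_single_eq.
  reflexivity.
Qed.

Definition at_least (n : nat) (T : Type) : Prop :=
  exists ds : nat -> T, forall i j, i < j < n -> ds i <> ds j.

Definition assign_below {M : model} (k : nat) (ds : nat -> D M) (g : assignment M)
  : assignment M := fun y => if y <? k then ds y else g y.

Lemma assign_below_update {M : model} k (ds : nat -> D M) g d :
  assign_below (S k) (update ds k d) g = update (assign_below k ds g) k d.
Proof.
  apply functional_extensionality; intros y; unfold assign_below, update.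
  destruct (Nat.eqb_spec y k), (Nat.ltb_spec y k), (Nat.ltb_spec y (S k)); auto; lia.
Qed.

Lemma update_same {M : model} (g : assignment M) x : update g x (g x) = g.
Proof.
  apply functional_extensionality; intros y; unfold update.
  destruct (Nat.eqb_spec y x); congruence.
Qed.

Lemma supp_single_ex_prefix M (w : W M) k : forall p g,
  supp M (single w) g (ex_prefix k p) <->
  exists ds, supp M (single w) (assign_below k ds g) p.
Proof.
  induction k as [|k IHk]; intros p g; simpl.
  - split; [intros H; exists (fun _ => d0 M); exact H | intros [ds H]; exact H].
  - rewrite IHk; setoid_rewrite supp_single_ex; split.
    + intros [ds [d H]]; exists (update ds k d); rewrite assign_below_update; exact H.
    + intros [ds H]; exists ds, (ds k).
      rewrite <- assign_below_update, update_same; exact H.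
Qed.

Lemma supp_single_top M (w : W M) g : supp M (single w) g fTop.
Proof. intros t _ Ht v Hv; exact (Ht v Hv). Qed.

Lemma supp_single_distinct_from M (w : W M) g i m :
  supp M (single w) g (distinct_from i m) <-> forall j, j < m -> g j <> g i.
Proof.
  induction m as [|m IHm]; simpl distinct_from.
  - split; [intros _ j Hj; lia | intros _; apply supp_single_top].
  - change (supp M (single w) g (distinct_from i m) /\
            supp M (single w) g (fNeq (tvar m) (tvar i)) <->
            forall j, j < S m -> g j <> g i).
    unfold fNeq; rewrite supp_single_neg, supp_single_eq, IHm; simpl.
    split.
    + intros [H Hm] j Hj; destruct (Nat.eq_dec j m) as [-> | Hjm]; [exact Hm | apply H; lia].
    + intros H; split; [intros j Hj |]; apply H; lia.
Qed.

Lemma supp_single_all_distinct M (w : W M) g n :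
  supp M (single w) g (all_distinct n) <-> forall i j, i < j < n -> g i <> g j.
Proof.
  induction n as [|n IHn]; simpl all_distinct.
  - split; [intros _ i j Hij; lia | intros _; apply supp_single_top].
  - change (supp M (single w) g (all_distinct n) /\
            supp M (single w) g (distinct_from n n) <->
            forall i j, i < j < S n -> g i <> g j).
    rewrite IHn, supp_single_distinct_from; split.
    + intros [H Hn] i j Hij; destruct (Nat.eq_dec j n) as [-> | Hjn].
      * apply Hn; lia.
      * apply H; lia.
    + intros H; split; [intros i j Hij; apply H; lia |].
      intros j Hj; apply H; lia.
Qed.

Lemma supp_single_chi M (w : W M) g n :
  supp M (single w) g (chi n) <-> at_least n (D M).
Proof.
  unfold chi, at_least; rewrite supp_single_ex_prefix.
  setoid_rewrite supp_single_all_distinct; unfold assign_below.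
  split; intros [ds H]; exists ds; intros i j Hij; specialize (H i j Hij);
    destruct (Nat.ltb_spec i n), (Nat.ltb_spec j n); auto; lia.
Qed.

Lemma chi_classical n : is_classical (chi n).
Proof.
  unfold chi.
  assert (Hdist : is_classical (all_distinct n)).
  { induction n as [|n IHn]; simpl; [tauto |].
    split; [exact IHn |]; generalize n at 2; intros m; induction m; simpl; tauto. }
  revert Hdist; generalize (all_distinct n); induction n; simpl; intros p Hp;
    [exact Hp | apply IHn; simpl; tauto].
Qed.

Lemma supp_chi M (s : state M) g n :
  supp M s g (chi n) <-> ((exists w, s w) -> at_least n (D M)).
Proof.
  rewrite (supp_classical M _ (chi_classical n)); setoid_rewrite supp_single_chi.
  firstorder.
Qed.

Definition constant (t : term) : Prop :=
  match t with tvar _ => False | _ => True end.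

Lemma tval_update_constant M g x d (w : W M) t :
  constant t -> tval M (update g x d) w t = tval M g w t.
Proof. destruct t; easy. Qed.

Definition determines {M : model} (s : state M) (F G : W M -> D M) : Prop :=
  forall w v, s w -> s v -> F w = F v -> G w = G v.

Lemma supp_dep M (s : state M) g t1 t2 : constant t1 -> constant t2 ->
  supp M s g (dep t1 t2) <->
  determines s (fun w => tval M g w t1) (fun w => tval M g w t2).
Proof.
  intros C1 C2; unfold dep, lam; simpl; split.
  - intros H w v Hw Hv E.
    destruct (H (fun u => u = w \/ u = v)) as [d Hd].
    + intros u [-> | ->]; assumption.
    + exists (tval M g w t1); intros u [-> | ->]; simpl;
        rewrite tval_update_constant by assumption; auto.
    + pose proof (Hd w (or_introl eq_refl)); pose proof (Hd v (or_intror eq_refl)).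
      simpl in *; rewrite !tval_update_constant in * by assumption; congruence.
  - intros Hdet t Hts [d Hd]; simpl in Hd.
    destruct (classic (exists w1, t w1)) as [[w1 Hw1] | Hnone].
    + exists (tval M g w1 t2); intros u Hu; simpl.
      rewrite tval_update_constant by assumption.
      apply Hdet; auto.
      pose proof (Hd u Hu); pose proof (Hd w1 Hw1).
      rewrite !tval_update_constant in * by assumption; congruence.
    + exists (d0 M); intros u Hu; destruct Hnone; eauto.
Qed.

Lemma supp_theta M (s : state M) g :
  supp M s g theta <-> exists x y, forall w, s w -> ~ (aI M w = x /\ bI M w = y).
Proof.
  change (supp M s g theta) with (exists x y, supp M s (update (update g 0 x) 1 y)
    (fNeg (fAnd (fEq (tvar 0) tA) (fEq (tvar 1) tB)))).
  setoid_rewrite supp_classical; [| simpl; tauto].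
  setoid_rewrite supp_single_neg; simpl.
  split; intros [x [y H]]; exists x, y; intros w Hw E; apply (H w Hw).
  - split; intros v ->; unfold update; simpl; symmetry; apply E.
  - destruct E as [Ha Hb]; specialize (Ha w eq_refl); specialize (Hb w eq_refl).
    unfold update in Ha, Hb; simpl in Ha, Hb; split; symmetry; assumption.
Qed.

(** * Infinite domains are Dedekind-infinite *)

Lemma fresh_of_at_least T (l : list T) : at_least (S (length l)) T -> exists d, ~ In d l.
Proof.
  intros [ds Hds]; apply NNPP; intros Hnone.
  assert (Hincl : incl (map ds (seq 0 (S (length l)))) l).
  { intros x _; apply NNPP; intros Hx; apply Hnone; exists x; exact Hx. }
  apply NoDup_incl_length in Hincl; [rewrite length_map, length_seq in Hincl; lia |].
  apply Injective_map_NoDup_in; [| apply seq_NoDup].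
  intros i j Hi Hj E; apply in_seq in Hi, Hj.
  destruct (Nat.lt_trichotomy i j) as [Hij | [Hij | Hij]]; [| exact Hij |];
    exfalso; [apply (Hds i j) | apply (Hds j i)]; auto; lia.
Qed.

Section FreshSequence.

Variables (T : Type) (fresh : list T -> T).
Hypothesis fresh_not_In : forall l, ~ In (fresh l) l.

Fixpoint fresh_prefix (n : nat) : list T :=
  match n with 0 => [] | S m => fresh (fresh_prefix m) :: fresh_prefix m end.

Lemma fresh_prefix_In i j : i < j -> In (fresh (fresh_prefix i)) (fresh_prefix j).
Proof.
  induction j as [|j IHj]; intros Hij; [lia |]; simpl.
  destruct (Nat.eq_dec i j) as [-> | Hne]; [left; reflexivity | right; apply IHj; lia].
Qed.

Lemma fresh_sequence_injective : Injective (fun n => fresh (fresh_prefix n)).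
Proof.
  assert (Hlt : forall i j, i < j -> fresh (fresh_prefix i) <> fresh (fresh_prefix j)).
  { intros i j Hij E; apply (fresh_not_In (fresh_prefix j)); rewrite <- E.
    apply fresh_prefix_In, Hij. }
  intros i j E; destruct (Nat.lt_trichotomy i j) as [Hij | [Hij | Hij]];
    [destruct (Hlt i j Hij E) | exact Hij | destruct (Hlt j i Hij (eq_sym E))].
Qed.

End FreshSequence.

Lemma injection_of_at_least T :
  (forall n, at_least n T) -> exists e : nat -> T, Injective e.
Proof.
  intros Hall.
  destruct (choice (fun (l : list T) d => ~ In d l)) as [fresh Hfresh].
  { intros l; apply fresh_of_at_least, Hall. }
  exists (fun n => fresh (fresh_prefix T fresh n)).
  exact (fresh_sequence_injective T fresh Hfresh).
Qed.

Section Shift.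

Variables (T : Type) (e : nat -> T).
Hypothesis e_injective : Injective e.

(* Moves [e k] to [e (S k)] and fixes every point outside the range of [e]. *)
Definition shift (x : T) : T :=
  match excluded_middle_informative (exists k, e k = x) with
  | left H => e (S (proj1_sig (constructive_indefinite_description _ H)))
  | right _ => x
  end.

Lemma shift_cases x :
  (exists k, e k = x /\ shift x = e (S k)) \/ ((forall k, e k <> x) /\ shift x = x).
Proof.
  unfold shift; destruct excluded_middle_informative as [H | H].
  - left; destruct (constructive_indefinite_description _ H) as [k Hk]; eauto.
  - right; split; [intros k Hk; apply H; eauto | reflexivity].
Qed.

Lemma shift_injective : Injective shift.
Proof.
  intros x y E.
  destruct (shift_cases x) as [[k [<- Hx]] | [Hx Hsx]],
           (shift_cases y) as [[l [<- Hy]] | [Hy Hsy]].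
  - rewrite Hx, Hy in E; apply e_injective in E; congruence.
  - destruct (Hy (S k)); congruence.
  - destruct (Hx (S l)); congruence.
  - congruence.
Qed.

Lemma shift_neq_e0 x : shift x <> e 0.
Proof.
  destruct (shift_cases x) as [[k [_ Hsx]] | [Hx Hsx]]; rewrite Hsx.
  - intros E; apply e_injective in E; discriminate.
  - intros E; apply (Hx 0); congruence.
Qed.

End Shift.

Lemma dedekind_infinite_of_at_least T : (forall n, at_least n T) ->
  exists (f : T -> T) (d : T), Injective f /\ forall x, f x <> d.
Proof.
  intros Hall; destruct (injection_of_at_least T Hall) as [e He].
  exists (shift T e), (e 0); split; [apply shift_injective | apply shift_neq_e0]; exact He.
Qed.

(** * Eta over Dedekind-infinite and over finite domains *)

Lemma supp_theta_of_eta M (s : state M) g (f : D M -> D M) (d : D M) :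
  Injective f -> (forall x, f x <> d) -> supp M s g eta -> supp M s g theta.
Proof.
  intros Hf Hd Heta; apply NNPP; rewrite supp_theta; intros Hth.
  assert (Honto : forall x y, exists w, s w /\ aI M w = x /\ bI M w = y).
  { intros x y; apply NNPP; intros Hn; apply Hth; exists x, y; intros w Hw E.
    apply Hn; exists w; split; [exact Hw | exact E]. }
  set (t := fun w => s w /\ bI M w = f (aI M w)).
  destruct (Heta t (fun w Hw => proj1 Hw)) as [x Hx].
  - split; [| split].
    + apply supp_dep; [exact I | exact I |].
      intros w v [_ Hw] [_ Hv] E; simpl in *; congruence.
    + apply supp_dep; [exact I | exact I |].
      intros w v [_ Hw] [_ Hv] E; simpl in *; apply Hf; congruence.
    + exists d; apply supp_neq; intros w [_ Hw]; simpl; rewrite Hw; apply not_eq_sym, Hd.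
  - rewrite supp_neq in Hx.
    destruct (Honto x (f x)) as [w [Hw [Ha Hb]]].
    apply (Hx w); cbn; [split; [exact Hw | congruence] | congruence].
Qed.

Lemma supp_eta_of_finite M (s : state M) g : Finite (D M) -> supp M s g eta.
Proof.
  intros Hfin t _ [_ [Hba [x Hx]]].
  rewrite supp_neq in Hx; rewrite supp_dep in Hba by exact I; cbn in Hx, Hba.
  apply NNPP; intros Hn.
  assert (Honto : forall y, exists w, t w /\ aI M w = y).
  { intros y; apply NNPP; intros Hy; apply Hn; exists y; apply supp_neq.
    intros w Hw E; apply Hy; exists w; split; [exact Hw | symmetry; exact E]. }
  destruct (choice _ Honto) as [pick Hpick].
  assert (Hinj : Injective (fun y => bI M (pick y))).
  { intros y y' E; destruct (Hpick y) as [Hy <-], (Hpick y') as [Hy' <-].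
    exact (Hba _ _ Hy Hy' E). }
  apply (Endo_Injective_Surjective Hfin (fun y z => classic (y = z))) in Hinj.
  destruct (Hinj x) as [y Hy].
  apply (Hx (pick y) (proj1 (Hpick y))); symmetry; exact Hy.
Qed.

Lemma X_eta_entails_theta : id_entails (fun phi => X phi \/ phi = eta) theta.
Proof.
  intros M s g H.
  destruct (classic (exists w, s w)) as [Hne | Hempty].
  - assert (Hinf : forall n, at_least n (D M)).
    { intros n; apply (supp_chi M s g n); [apply H; left; exists n |]; auto. }
    destruct (dedekind_infinite_of_at_least _ Hinf) as [f [d [Hf Hd]]].
    exact (supp_theta_of_eta M s g f d Hf Hd (H eta (or_intror eq_refl))).
  - apply supp_empty; intros w Hw; apply Hempty; exists w; exact Hw.
Qed.

Lemma chi_list_bounded (X0 : list form) : (forall phi, In phi X0 -> X phi) ->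
  exists N, forall phi, In phi X0 -> exists n, n <= N /\ phi = chi n.
Proof.
  induction X0 as [|p X0 IH]; intros HX; [exists 0; intros phi [] |].
  destruct IH as [N HN]; [intros phi Hphi; apply HX; right; exact Hphi |].
  destruct (HX p (or_introl eq_refl)) as [m ->].
  exists (max N m); intros phi [<- | Hphi].
  - exists m; split; [lia | reflexivity].
  - destruct (HN phi Hphi) as [n [Hn ->]]; exists n; split; [lia | reflexivity].
Qed.

(* [Fin.F1] is a junk value outside [0, N]. *)
Definition fin_of_nat (N i : nat) : Fin.t (S N) :=
  match lt_dec i (S N) with left h => Fin.of_nat_lt h | right _ => Fin.F1 end.

Lemma at_least_fin n N : n <= S N -> at_least n (Fin.t (S N)).
Proof.
  intros HnN; exists (fin_of_nat N); intros i j Hij E; unfold fin_of_nat in E.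
  destruct (lt_dec i (S N)), (lt_dec j (S N)); try lia.
  apply (f_equal (fun k => proj1_sig (Fin.to_nat k))) in E.
  rewrite !Fin.to_nat_of_nat in E; simpl in E; lia.
Qed.

Definition square_model (N : nat) : model :=
  {| W := Fin.t (S N) * Fin.t (S N); D := Fin.t (S N);
     w0 := (Fin.F1, Fin.F1); d0 := Fin.F1; aI := fst; bI := snd |}.

Lemma finite_X_eta_not_entails_theta (X0 : list form) :
  (forall phi, In phi X0 -> X phi) ->
  ~ id_entails (fun phi => In phi X0 \/ phi = eta) theta.
Proof.
  intros HX Hent; destruct (chi_list_bounded X0 HX) as [N HN].
  assert (Htheta : supp (square_model N) (fun _ => True) (fun _ => Fin.F1) theta).
  { apply Hent; intros phi [Hphi | ->].
    - destruct (HN phi Hphi) as [n [Hn ->]].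
      apply supp_chi; intros _; apply at_least_fin; lia.
    - apply supp_eta_of_finite, Fin_Finite. }
  apply supp_theta in Htheta as [x [y Hxy]].
  exact (Hxy (x, y) I (conj eq_refl eq_refl)).
Qed.

Theorem mainTheorem3 :
  id_entails (fun phi => X phi \/ phi = eta) theta /\
  (forall X0 : list form,
      (forall phi, In phi X0 -> X phi) ->
      ~ id_entails (fun phi => In phi X0 \/ phi = eta) theta).
Proof.
  split; [exact X_eta_entails_theta | exact finite_X_eta_not_entails_theta].
Qed.
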